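(* Let $(\mathfrak g,\{e_1,\dots,e_n\})$ be a nice nilpotent Lie algebra with root matrix $M_\Delta\in\mathbb R^{m\times n}$ and structure constants $c_{ij}^k$, and let $b\in\mathbb R^m$ be a solution of $M_\Delta M_\Delta^{T} b=[1]$. Let $g=\sum_{i=1}^n g_i\, e^i\otimes e^i$ ($g_i\neq 0$) be a diagonal pseudo-Riemannian metric on $\mathfrak g$, let $\lambda\in\mathbb R$, and define $X\in\mathbb R^m$ by letting, for the row $h$ of $M_\Delta$ corresponding to $(\{i,j\},k)$ with $i<j$, $$X_h=\frac{g_k}{g_ig_j}\,(c_{ij}^k)^2 .$$ Then the following are equivalent: (1) $g$ is a nilsoliton with $\operatorname{Ric}=\lambda\,\mathrm{id}+D$ for some derivation $D$ of $\mathfrak g$; (2) $\operatorname{Ric}=\lambda(\mathrm{id}-N)$, where $N$ is the diagonal Nikolayevsky derivation; (3) $X\in -2\lambda b+\ker M_\Delta^{T}$.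
   Context: A nice Lie algebra is a Lie algebra $\mathfrak g$ with a basis $\{e_1,\dots,e_n\}$ (dual basis $\{e^1,\dots,e^n\}$) such that each bracket $[e_i,e_j]$ is a multiple of some $e_k$ and each $e_i\lrcorner\, de^j$ is a multiple of some $e^k$, where $d$ is the Chevalley–Eilenberg differential. Write $[e_i,e_j]=c_{ij}^k e_k$ for $i<j$. The root matrix $M_\Delta$ has one row for each triple $(\{i,j\},k)$ such that $[e_i,e_j]$ is a nonzero multiple of $e_k$; that row has $+1$ in position $k$, $-1$ in positions $i$ and $j$, and $0$ elsewhere; $m$ is the number of rows. $[1]$ denotes the vector with all entries $1$, and for $v\in\mathbb R^n$, $v^D$ denotes the diagonal matrix (in the basis $\{e_i\}$) with diagonal entries those of $v$. The diagonal Nikolayevsky derivation is $N=v^D$ with $v=M_\Delta^{T}b+[1]$, where $b$ is any solution of $M_\Delta M_\Delta^T b=[1]$. $\operatorname{Ric}$ denotes the Ricci operator of the left-invariant pseudo-Riemannian metric determined by $g$. A metric is a nilsoliton if $\operatorname{Ric}=\lambda\,\mathrm{id}+D$ with $\lambda\in\mathbb R$ and $D$ a derivation. *)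

From HB Require Import structures.
From mathcomp Require Import all_boot all_order all_algebra.
From mathcomp Require Import reals.
Set Implicit Arguments. Unset Strict Implicit. Unset Printing Implicit Defensive.
Import Order.TTheory GRing.Theory Num.Theory.
Local Open Scope ring_scope.

(* A Lie algebra g of dimension n with basis e_0..e_(n-1) is given by its
   structure constants: [e_i, e_j] = \sum_k c i j k e_k.
   Endomorphisms are represented by matrices A with
   A k l = coefficient of e_k in A(e_l)  (column convention). *)

Section Defs.
Variables (R : realType) (n : nat) (c : 'I_n -> 'I_n -> 'I_n -> R).

Definition lie_algebra : Prop :=
  (forall i j k, c i j k = - c j i k) /\
  (forall i j l q,
     \sum_p (c j l p * c i p q + c l i p * c j p q + c i j p * c l p q) = 0).

Definition ad (i : 'I_n) : 'M[R]_n := \matrix_(k, l) c i l k.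

Definition nilpotent_lie : Prop :=
  exists p : nat, forall s : seq 'I_n, size s = p ->
    foldr (fun i A => ad i *m A) 1%:M s = 0.

(* (e_i ⌟ d e^j)(e_l) = d e^j (e_i, e_l) = - e^j([e_i, e_l]) *)
Definition contr_de (i j l : 'I_n) : R := - c i l j.

Definition nice_basis : Prop :=
  (forall i j, exists k, forall k', k' != k -> c i j k' = 0) /\
  (forall i j, exists k, forall l, l != k -> contr_de i j l = 0).

Definition nice_nilpotent : Prop :=
  [/\ lie_algebra, nilpotent_lie & nice_basis].

Definition derivation (D : 'M[R]_n) : Prop :=
  forall i j l,
    \sum_k c i j k * D l k = \sum_p D p i * c p j l + \sum_p D p j * c i p l.

(* Rows of the root matrix: triples ((i, j), k) with i < j and c i j k != 0,
   enumerated in the (fixed) enumeration order of the finite set. *)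
Definition rootset : {set ('I_n * 'I_n) * 'I_n} :=
  [set t : ('I_n * 'I_n) * 'I_n | (t.1.1 < t.1.2)%N && (c t.1.1 t.1.2 t.2 != 0)].

Definition nroots : nat := #|rootset|.

Definition root_of (h : 'I_nroots) : ('I_n * 'I_n) * 'I_n := enum_val h.

Definition root_matrix : 'M[R]_(nroots, n) :=
  \matrix_(h, l) let t := root_of h in
    ((l == t.2)%:R - (l == t.1.1)%:R - (l == t.1.2)%:R).

Definition nikolayevsky (b : 'cV[R]_nroots) : 'M[R]_n :=
  diag_mx (((root_matrix)^T *m b + const_mx 1)^T).

Definition Xvec (g : 'I_n -> R) : 'cV[R]_nroots :=
  \col_h let t := root_of h in
    g t.2 / (g t.1.1 * g t.1.2) * (c t.1.1 t.1.2 t.2) ^+ 2.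

(* Left-invariant pseudo-Riemannian metric given by the Gram matrix G,
   G a b = g(e_a, e_b). Levi-Civita connection via the Koszul formula:
   2 g(nabla_x y, z) = g([x,y],z) - g([y,z],x) + g([z,x],y). *)
Variable G : 'M[R]_n.

Definition koszul (a b d : 'I_n) : R :=
  \sum_p c a b p * G p d - \sum_p c b d p * G p a + \sum_p c d a p * G p b.

(* nabla_{e_a} e_b = \sum_e Gam a b e e_e *)
Definition Gam (a b e : 'I_n) : R :=
  2^-1 * \sum_d invmx G e d * koszul a b d.

(* R(e_a,e_b) e_f = nabla_a nabla_b e_f - nabla_b nabla_a e_f - nabla_[e_a,e_b] e_f
   = \sum_q Riem a b f q e_q *)
Definition Riem (a b f q : 'I_n) : R :=
  \sum_e (Gam b f e * Gam a e q - Gam a f e * Gam b e q)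
  - \sum_p c a b p * Gam p f q.

(* Ricci tensor ric(y, z) = tr (x |-> R(x, y) z) *)
Definition ric (b f : 'I_n) : R := \sum_a Riem a b f a.

(* Ricci operator: g(Ric y, z) = ric(y, z) *)
Definition ricci : 'M[R]_n := ((\matrix_(b, f) ric b f) *m invmx G)^T.

End Defs.

Arguments root_of {R n} c h.
Arguments nikolayevsky {R n} c b.
Arguments Xvec {R n} c g.

(** In a nice basis each ad e_i maps every e_a to a multiple of a single basis vector.
    When a word in these operators maps e_a to a multiple of itself, that multiple is an
    eigenvalue of a nilpotent operator, hence 0: so c_{ea}^a = 0 and c_{ab}^e c_{ef}^a = 0.
    With these identities the Koszul formula for a diagonal metric gives a diagonal Ricci
    operator, Ric = (1/2 M_Δ^T X)^D, niceness killing every off-diagonal contribution.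
    A diagonal endomorphism v^D is a derivation iff M_Δ v = 0, and M_Δ [1] = -[1].
    Put u = 1/2 M_Δ^T X + λ M_Δ^T b. Then Ric - λ(id - N) = u^D, so (2) and (3) both say
    u = 0, while by M_Δ M_Δ^T b = [1] condition (1) says M_Δ u = 0; the two agree because
    u lies in the image of M_Δ^T, on which M_Δ is injective. *)

From mathcomp Require Import all_boot all_algebra.
From mathcomp Require Import reals.
From mathcomp Require Import ring.
Set Implicit Arguments. Unset Strict Implicit. Unset Printing Implicit Defensive.
Import GRing.Theory Num.Theory.
Local Open Scope ring_scope.

Lemma sumr_pred1_mul (R : pzSemiRingType) (I : finType) (k : I) (F : I -> R) :
  \sum_l (l == k)%:R * F l = F k.
Proof.
rewrite (bigD1 k) //= eqxx mul1r big1 ?addr0 // => l /negPf ->.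
by rewrite mul0r.
Qed.

Lemma sum_pair_symmetrize (R : numDomainType) (I : finType) (K K' : I -> I -> R) :
  (forall a e, K a e + K e a = K' a e + K' e a) ->
  \sum_a \sum_e K a e = \sum_a \sum_e K' a e.
Proof.
move=> HK; have twice (L : I -> I -> R) :
    \sum_a \sum_e (L a e + L e a) = (\sum_a \sum_e L a e) *+ 2.
  under eq_bigr do rewrite big_split.
  by rewrite big_split /= [X in _ + X]exchange_big mulr2n.
apply/eqP; rewrite -[_ == _]orFb -(eqrMn2r 2) -!twice; apply/eqP.
by apply: eq_bigr => a _; apply: eq_bigr.
Qed.

Lemma sum_ltn_sym (R : numFieldType) (m : nat) (F : 'I_m -> 'I_m -> R) :
  (forall i j, F j i = F i j) -> (forall i, F i i = 0) ->
  \sum_(i < m) \sum_(j < m) (i < j)%N%:R * F i j = 2^-1 * \sum_i \sum_j F i j.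
Proof.
move=> Fsym Fdiag; rewrite mulr_sumr; under [RHS]eq_bigr do rewrite mulr_sumr.
apply: sum_pair_symmetrize => i j; rewrite (Fsym j i).
have two_neq0 : (2 : R) != 0 by rewrite pnatr_eq0.
by case: ltngtP => [_|_|/val_inj ->]; rewrite ?Fdiag /=; field.
Qed.

Lemma invmx_diag (F : fieldType) (m : nat) (d : 'rV[F]_m) :
  (forall i, d 0 i != 0) -> invmx (diag_mx d) = diag_mx (\row_i (d 0 i)^-1).
Proof.
move=> dnz; have dd : diag_mx d *m diag_mx (\row_i (d 0 i)^-1) = 1%:M.
  rewrite mulmx_diag -diag_const_mx; congr diag_mx.
  by apply/rowP => i; rewrite !mxE mulfV.
have [dU _] := mulmx1_unit dd.
by rewrite -[RHS]mul1mx -(mulVmx dU) -mulmxA dd mulmx1.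
Qed.

Lemma sum_mul_diag (R : pzSemiRingType) (m : nat) (x : 'I_m -> R) (d : 'rV[R]_m) j :
  \sum_i x i * diag_mx d i j = x j * d 0 j.
Proof.
rewrite (bigD1 j) //= mxE eqxx mulr1n big1 ?addr0 // => i /negPf ij.
by rewrite mxE ij mulr0n mulr0.
Qed.

Lemma sum_diag_mul (R : pzSemiRingType) (m : nat) (x : 'I_m -> R) (d : 'rV[R]_m) j :
  \sum_i diag_mx d j i * x i = d 0 j * x j.
Proof.
rewrite (bigD1 j) //= mxE eqxx mulr1n big1 ?addr0 // => i; rewrite eq_sym => /negPf ji.
by rewrite mxE ji mulr0n mul0r.
Qed.

Lemma diag_mx_sym (R : pzSemiRingType) (m : nat) (d : 'rV[R]_m) i j :
  diag_mx d i j = diag_mx d j i.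
Proof. by rewrite -[in LHS]tr_diag_mx mxE. Qed.

Lemma diag_mx_inj (R : pzSemiRingType) (m : nat) : injective (@diag_mx R m).
Proof.
move=> d e /matrixP de; apply/rowP => i.
by have := de i i; rewrite !mxE eqxx !mulr1n.
Qed.

Lemma trmx_mulmx_ker (R : realDomainType) (m p : nat) (M : 'M[R]_(m, p))
    (z : 'cV[R]_m) :
  M *m (M^T *m z) = 0 -> M^T *m z = 0.
Proof.
set u := M^T *m z => Mu0.
have uu : u^T *m u = 0 by rewrite {1}/u trmx_mul trmxK -mulmxA Mu0 mulmx0.
have sq0 : \sum_i u i 0 ^+ 2 = (u^T *m u) 0 0.
  by rewrite [RHS]mxE; apply: eq_bigr => i _; rewrite [u^T _ _]mxE expr2.
rewrite uu mxE in sq0.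
move/eqP: sq0; rewrite psumr_eq0 => [/allP u0|i _]; last exact: sqr_ge0.
apply/matrixP => i j; rewrite ord1 [RHS]mxE.
by have := u0 i (mem_index_enum i); rewrite sqrf_eq0 => /eqP.
Qed.

Section NiceNilpotent.
Variables (R : realType) (n : nat) (c : 'I_n -> 'I_n -> 'I_n -> R).

Definition ad_word (s : seq 'I_n) : 'M[R]_n := foldr (fun i A => ad c i *m A) 1%:M s.

Lemma ad_word_cat s t : ad_word (s ++ t) = ad_word s *m ad_word t.
Proof. by elim: s => [|i s IHs] /=; rewrite ?mul1mx // IHs mulmxA. Qed.

Lemma ad_word_eigen0 w (u : 'cV[R]_n) mu : nilpotent_lie c ->
  w != [::] -> u != 0 -> ad_word w *m u = mu *: u -> mu = 0.
Proof.
move=> [p nilp] w_neq0 u_neq0 wu.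
have wku k : ad_word (flatten (nseq k w)) *m u = mu ^+ k *: u.
  elim: k => [|k IHk] /=; first by rewrite mul1mx scale1r.
  by rewrite ad_word_cat -mulmxA IHk -scalemxAr wu scalerA exprS mulrC.
have long : (p <= size (flatten (nseq p w)))%N.
  by rewrite size_flatten /shape map_nseq sumn_nseq leq_pmull // lt0n size_eq0.
have := wku p; rewrite -(cat_take_drop p (flatten _)) ad_word_cat.
rewrite [ad_word (take _ _)]nilp ?size_takel // !mul0mx => /esym/eqP.
by rewrite scaler_eq0 (negPf u_neq0) expf_eq0 orbF => /andP[_ /eqP].
Qed.

Lemma ad_mul_delta i a k : (forall k', k' != k -> c i a k' = 0) ->
  ad c i *m delta_mx a 0 = c i a k *: delta_mx k 0 :> 'cV[R]_n.
Proof.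
move=> ck; apply/matrixP => x y; rewrite !mxE (bigD1 a) //= big1 ?addr0.
  rewrite !mxE eqxx ord1 eqxx !mulr1.
  by case: (eqVneq x k) => [->|/ck ->]; rewrite ?mulr1 ?mulr0.
by move=> j /negPf ja; rewrite !mxE ja mulr0.
Qed.

Lemma delta_col_neq0 a : delta_mx a 0 != 0 :> 'cV[R]_n.
Proof.
by apply/negP => /eqP/matrixP/(_ a 0); rewrite !mxE !eqxx => /eqP; rewrite oner_eq0.
Qed.

Hypothesis nice : nice_nilpotent c.

Let nilp : nilpotent_lie c. Proof. by case: nice. Qed.

Lemma c_anti i j k : c i j k = - c j i k.
Proof. by case: nice => -[]. Qed.

Lemma c_diag0 i k : c i i k = 0.
Proof. by have /eqP := c_anti i i k; rewrite -addr_eq0 -mulr2n mulrn_eq0 => /eqP. Qed.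

Lemma c_nice_out i j : exists k, forall k', k' != k -> c i j k' = 0.
Proof. by case: nice => _ _ []. Qed.

Lemma c_nice_in i j : exists k, forall l, l != k -> c i l j = 0.
Proof.
case: nice => _ _ [_ /(_ i j) [k ck]]; exists k => l /ck.
by rewrite /contr_de => /eqP; rewrite oppr_eq0 => /eqP.
Qed.

Lemma c_fix0 e a : c e a a = 0.
Proof.
have [k ck] := c_nice_out e a.
have [ak|/ck //] := eqVneq a k; subst k.
apply: (ad_word_eigen0 (w := [:: e]) nilp _ (delta_col_neq0 a)) => //.
by rewrite /ad_word /= mulmx1 (ad_mul_delta ck).
Qed.

Lemma c_cycle0 a b e f : c a b e * c e f a = 0.
Proof.
rewrite (c_anti a) (c_anti e) mulrNN mulrC.
have [k ck] := c_nice_out b a; have [k' ck'] := c_nice_out f e.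
have [ek|/ck ->] := eqVneq e k; last by rewrite mulr0.
have [ak|/ck' ->] := eqVneq a k'; last by rewrite mul0r.
subst k k'; apply: (ad_word_eigen0 (w := [:: f; b]) nilp _ (delta_col_neq0 a)) => //.
rewrite /ad_word /= mulmx1 -mulmxA (ad_mul_delta ck) -scalemxAr (ad_mul_delta ck').
by rewrite scalerA mulrC.
Qed.

Lemma c_out_mul0 e a b f : b != f -> c e a f * c e a b = 0.
Proof.
have [k ck] := c_nice_out e a.
have [->|/ck ->] := eqVneq f k; last by rewrite mul0r.
by have [->|/ck ->] := eqVneq b k; rewrite ?eqxx ?mulr0.
Qed.

Lemma c_in_mul0 a b e f : b != f -> c a b e * c f a e = 0.
Proof.
rewrite (c_anti f); have [k ck] := c_nice_in a e.
have [->|/ck ->] := eqVneq f k; last by rewrite oppr0 mulr0.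
by have [->|/ck ->] := eqVneq b k; rewrite ?eqxx ?mul0r.
Qed.

End NiceNilpotent.

Section RootMatrix.
Variables (R : realType) (n : nat) (c : 'I_n -> 'I_n -> 'I_n -> R).
Local Notation M := (root_matrix c).

Lemma root_matrix_mul (w : 'cV[R]_n) h :
  (M *m w) h 0 = w (root_of c h).2 0 - w (root_of c h).1.1 0 - w (root_of c h).1.2 0.
Proof.
rewrite mxE; under eq_bigr do rewrite mxE /= !mulrBl.
by rewrite !sumrB !sumr_pred1_mul.
Qed.

Lemma root_matrix_const1 : M *m const_mx 1 = - const_mx 1 :> 'cV[R]_(nroots c).
Proof. by apply/colP => h; rewrite root_matrix_mul !mxE; ring. Qed.

Lemma trmx_root_matrix_mul_col (F : 'I_n -> 'I_n -> 'I_n -> R) k :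
  (forall i j l, c i j l = 0 -> F i j l = 0) ->
  (M^T *m \col_h F (root_of c h).1.1 (root_of c h).1.2 (root_of c h).2) k 0 =
  \sum_(i < n) \sum_(j < n) (i < j)%N%:R *
    \sum_l ((l == k)%:R - (i == k)%:R - (j == k)%:R) * F i j l.
Proof.
move=> F0; pose Phi (t : ('I_n * 'I_n) * 'I_n) :=
  ((t.2 == k)%:R - (t.1.1 == k)%:R - (t.1.2 == k)%:R) * F t.1.1 t.1.2 t.2.
have sum_triple (H : ('I_n * 'I_n) * 'I_n -> R) :
    \sum_t H t = \sum_i \sum_j \sum_l H ((i, j), l).
  by rewrite [RHS]pair_bigA [RHS]pair_bigA; apply: eq_bigr => -[[]].
rewrite mxE (eq_bigr (fun h => Phi (root_of c h))) => [|h _]; last first.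
  by rewrite !mxE /Phi /= !(eq_sym k).
rewrite /root_of /nroots -(big_enum_val Phi) big_mkcond sum_triple /=.
apply: eq_bigr => i _; apply: eq_bigr => j _; rewrite mulr_sumr.
apply: eq_bigr => l _; rewrite /rootset inE /=.
case: (i < j)%N; rewrite /= ?mul1r ?mul0r //.
by case: eqP => [/F0 ->|_]; rewrite /Phi /= ?mulr0.
Qed.

Lemma root_matrix_mul_eq0P (w : 'cV[R]_n) :
  M *m w = 0 <->
  forall i j l : 'I_n, (i < j)%N -> c i j l != 0 -> w l 0 = w i 0 + w j 0.
Proof.
split=> [Mw0 i j l ij cijl | wadd].
  have ijl : ((i, j), l) \in rootset c by rewrite inE /= ij cijl.
  have := congr1 (fun v : 'cV_(nroots c) => v (enum_rank_in ijl ((i, j), l)) 0) Mw0.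
  rewrite root_matrix_mul /root_of (enum_rankK_in ijl ijl) mxE /= => /eqP.
  by rewrite subr_eq0 subr_eq addrC => /eqP.
apply/colP => h; rewrite root_matrix_mul mxE.
have := enum_valP h; rewrite inE => /andP[ij cijl].
by rewrite /root_of (wadd _ _ _ ij cijl); ring.
Qed.

End RootMatrix.

Section DiagonalMetric.
Variables (R : realType) (n : nat) (c : 'I_n -> 'I_n -> 'I_n -> R) (g : 'I_n -> R).
Hypothesis nice : nice_nilpotent c.
Hypothesis g_neq0 : forall i, g i != 0.
Let G := diag_mx (\row_i g i).

Definition christoffel a b e :=
  2^-1 * (g e)^-1 * (c a b e * g e - c b e a * g a + c e a b * g b).

Lemma Gam_diag a b e : Gam c G a b e = christoffel a b e.
Proof.
rewrite /Gam /koszul invmx_diag => [|i]; last by rewrite mxE.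
by rewrite sum_diag_mul !sum_mul_diag !mxE mulrA.
Qed.

Lemma christoffel_self a e : christoffel a e a = 0.
Proof. by rewrite /christoffel (c_anti nice a e a) !(c_fix0 nice, c_diag0 nice); ring. Qed.

Definition ric_term b f a e :=
  - (christoffel a f e * christoffel b e a + c a b e * christoffel e f a).

Lemma ric_sum b f : ric c G b f = \sum_a \sum_e ric_term b f a e.
Proof.
apply: eq_bigr => a _; rewrite /Riem -sumrB; apply: eq_bigr => e _.
by rewrite !Gam_diag christoffel_self /ric_term; ring.
Qed.

Definition ric_term_sym b f a e :=
  4^-1 * (g f * g b) / (g e * g a) * (c e a f * c e a b)
  + 2^-1 * (g e / g a) * (c a b e * c f a e).

Lemma ric_term_pair b f a e :
  ric_term b f a e + ric_term b f e a = ric_term_sym b f a e + ric_term_sym b f e a.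
Proof.
rewrite /ric_term /ric_term_sym /christoffel.
rewrite (c_anti nice f a e) (c_anti nice e f a) (c_anti nice a e f) (c_anti nice e b a)
  (c_anti nice a e b) (c_anti nice b a e).
have K1 : c a b e * c f e a = 0.
  by apply/eqP; rewrite -oppr_eq0 -mulrN -(c_anti nice) c_cycle0.
have K2 : c b e a * c a f e = 0.
  by apply/eqP; rewrite -oppr_eq0 -mulNr -(c_anti nice) c_cycle0.
have two_neq0 : (2 : R) != 0 by rewrite pnatr_eq0.
have four_neq0 : (4 : R) != 0 by rewrite pnatr_eq0.
have ga := g_neq0 a; have ge := g_neq0 e.
(* The two sides differ by multiples of the products [K1] and [K2]. *)
move: K1 K2 => /eqP; rewrite mulf_eq0 => /orP[] /eqP -> /eqP;
  rewrite mulf_eq0 => /orP[] /eqP ->; field; by rewrite ga ge.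
Qed.

Lemma ric_sym_sum b f : ric c G b f = \sum_a \sum_e ric_term_sym b f a e.
Proof. by rewrite ric_sum; apply: sum_pair_symmetrize; apply: ric_term_pair. Qed.

Lemma ric_offdiag b f : b != f -> ric c G b f = 0.
Proof.
move=> bf; rewrite ric_sym_sum big1 // => a _; rewrite big1 // => e _.
by rewrite /ric_term_sym (c_out_mul0 nice) // (c_in_mul0 nice) // !mulr0 addr0.
Qed.

Definition Xcoef i j l := g l / (g i * g j) * c i j l ^+ 2.

Lemma Xcoef_sym i j l : Xcoef j i l = Xcoef i j l.
Proof. by rewrite /Xcoef (c_anti nice j) sqrrN (mulrC (g j)). Qed.

Lemma Xcoef_diag i l : Xcoef i i l = 0.
Proof. by rewrite /Xcoef (c_diag0 nice) expr0n mulr0. Qed.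

Lemma ric_diag k :
  ric c G k k / g k = \sum_a \sum_e (4^-1 * Xcoef a e k - 2^-1 * Xcoef k a e).
Proof.
rewrite ric_sym_sum mulr_suml; apply: eq_bigr => a _; rewrite mulr_suml.
apply: eq_bigr => e _; rewrite /ric_term_sym (Xcoef_sym a k) /Xcoef.
rewrite (c_anti nice e a k) (c_anti nice k a e).
have two_neq0 : (2 : R) != 0 by rewrite pnatr_eq0.
have four_neq0 : (4 : R) != 0 by rewrite pnatr_eq0.
have ga := g_neq0 a; have ge := g_neq0 e; have gk := g_neq0 k.
by field; rewrite ?ga ?ge ?gk.
Qed.

Lemma ricci_diagE i j : ricci c G i j = ric c G j i / g i.
Proof.
rewrite /ricci mxE invmx_diag => [|l]; last by rewrite mxE.
by rewrite mul_mx_diag !mxE.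
Qed.

Lemma ric_diag_root_matrix k :
  ric c G k k / g k = 2^-1 * ((root_matrix c)^T *m Xvec c g) k 0.
Proof.
pose S i j := \sum_l Xcoef i j l.
have S_sym i j : S j i = S i j by apply: eq_bigr => l _; rewrite Xcoef_sym.
have Xcoef0 i j l : c i j l = 0 -> Xcoef i j l = 0.
  by rewrite /Xcoef => ->; rewrite expr0n mulr0.
rewrite ric_diag (trmx_root_matrix_mul_col _ Xcoef0).
have inner i j : \sum_l ((l == k)%:R - (i == k)%:R - (j == k)%:R) * Xcoef i j l =
    Xcoef i j k - ((i == k)%:R + (j == k)%:R) * S i j.
  under eq_bigr do rewrite -addrA -opprD mulrBl.
  by rewrite sumrB sumr_pred1_mul -mulr_sumr.
under [Y in _ = _ * Y]eq_bigr do under eq_bigr do rewrite inner.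
rewrite sum_ltn_sym => [|i j|i]; first last.
- by rewrite Xcoef_diag /S big1 ?mulr0 ?subr0 // => l _; rewrite Xcoef_diag.
- by rewrite Xcoef_sym S_sym (addrC (j == k)%:R).
have deltaS : \sum_i \sum_j ((i == k)%:R + (j == k)%:R) * S i j = (\sum_j S k j) *+ 2.
  transitivity (\sum_i (i == k)%:R * \sum_j S i j + \sum_i \sum_j (j == k)%:R * S i j).
    rewrite -big_split; apply: eq_bigr => i _.
    by rewrite mulr_sumr -big_split; apply: eq_bigr => j _; rewrite mulrDl.
  rewrite sumr_pred1_mul; under [Y in _ + Y]eq_bigr do rewrite sumr_pred1_mul.
  by rewrite mulr2n; congr (_ + _); apply: eq_bigr => i _; rewrite S_sym.
under [Y in _ = _ * (_ * Y)]eq_bigr do rewrite sumrB.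
rewrite sumrB deltaS.
under eq_bigr do rewrite sumrB -!mulr_sumr.
rewrite sumrB -!mulr_sumr.
have two_neq0 : (2 : R) != 0 by rewrite pnatr_eq0.
have four_neq0 : (4 : R) != 0 by rewrite pnatr_eq0.
by field.
Qed.

Lemma ricci_diag : ricci c G = diag_mx ((2^-1 *: ((root_matrix c)^T *m Xvec c g))^T).
Proof.
apply/matrixP => i j; rewrite ricci_diagE [RHS]mxE.
have [<-|ij] := eqVneq i j.
  by rewrite ric_diag_root_matrix mulr1n [_^T _ _]mxE [RHS]mxE.
by rewrite ric_offdiag 1?eq_sym // mul0r mulr0n.
Qed.

End DiagonalMetric.

Section Derivations.
Variables (R : realType) (n : nat) (c : 'I_n -> 'I_n -> 'I_n -> R).
Local Notation M := (root_matrix c).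

Lemma derivation_diagE (w : 'cV[R]_n) :
  derivation c (diag_mx w^T) <->
  forall i j l, c i j l * w l 0 = (w i 0 + w j 0) * c i j l.
Proof.
suff E i j l : \sum_k c i j k * diag_mx w^T l k = c i j l * w l 0 /\
    \sum_p diag_mx w^T p i * c p j l + \sum_p diag_mx w^T p j * c i p l =
    (w i 0 + w j 0) * c i j l.
  by split=> D i j l; have [E1 E2] := E i j l; [rewrite -E1 -E2 | rewrite E1 E2]; apply: D.
split; first by under eq_bigr do rewrite diag_mx_sym; rewrite sum_mul_diag mxE.
under eq_bigr do rewrite diag_mx_sym; under [X in _ + X]eq_bigr do rewrite diag_mx_sym.
by rewrite !sum_diag_mul !mxE mulrDl.
Qed.

Hypothesis nice : nice_nilpotent c.

Lemma derivation_diag_root_matrix (w : 'cV[R]_n) :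
  derivation c (diag_mx w^T) <-> M *m w = 0.
Proof.
rewrite derivation_diagE root_matrix_mul_eq0P; split=> [D i j l _ cijl | wadd i j l].
  by apply/(mulIf cijl); rewrite mulrC D.
have [->|cijl] := eqVneq (c i j l) 0; first by rewrite mul0r mulr0.
case: (ltngtP i j) => [ij|ji|/val_inj ij]; last by move: cijl; rewrite ij c_diag0 ?eqxx.
  by rewrite (wadd i j) // mulrC.
rewrite (wadd j i) //; last by rewrite (c_anti nice) oppr_eq0.
by rewrite addrC mulrC.
Qed.

End Derivations.

Section Nilsoliton.
Variables (R : realType) (n : nat) (c : 'I_n -> 'I_n -> 'I_n -> R) (g : 'I_n -> R).
Variables (lam : R) (b : 'cV[R]_(nroots c)).
Hypothesis nice : nice_nilpotent c.
Hypothesis g_neq0 : forall i, g i != 0.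
Local Notation M := (root_matrix c).
Hypothesis MMtb : M *m M^T *m b = const_mx 1.
Let G := diag_mx (\row_i g i).
Let r := 2^-1 *: (M^T *m Xvec c g).
Let u := r + lam *: (M^T *m b).

Lemma soliton_derivation_iff :
  (exists D, derivation c D /\ ricci c G = lam%:M + D) <-> u = 0.
Proof.
have ricci_lam : ricci c G - lam%:M = diag_mx (r - const_mx lam)^T.
  by rewrite ricci_diag // !linearB /= trmx_const diag_const_mx.
have Mu : M *m (r - const_mx lam) = M *m u.
  have -> : const_mx lam = lam *: const_mx 1 :> 'cV_n by rewrite scalemx_const mulr1.
  rewrite mulmxBr -[M *m (lam *: _)]scalemxAr root_matrix_const1 scalerN opprK.
  by rewrite mulmxDr -[M *m (lam *: _)]scalemxAr mulmxA MMtb.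
have uE : u = M^T *m (2^-1 *: Xvec c g + lam *: b) by rewrite mulmxDr -!scalemxAr.
split=> [[D [DD ricciD]] | u0].
  have D_diag : D = diag_mx (r - const_mx lam)^T by rewrite -ricci_lam ricciD addrC addKr.
  move: DD; rewrite D_diag derivation_diag_root_matrix // Mu uE.
  exact: trmx_mulmx_ker.
exists (diag_mx (r - const_mx lam)^T); split; last by rewrite -ricci_lam addrC subrK.
by rewrite derivation_diag_root_matrix // Mu u0 mulmx0.
Qed.

Lemma soliton_nikolayevsky_iff :
  ricci c G = lam *: (1%:M - nikolayevsky c b) <-> u = 0.
Proof.
have -> : lam *: (1%:M - nikolayevsky c b) = diag_mx (- lam *: (M^T *m b))^T.
  by apply/matrixP => i j; rewrite !mxE; case: (i == j); rewrite /= ?mulr1n ?mulr0n; ring.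
rewrite ricci_diag //; split=> [/diag_mx_inj/trmx_inj ru | /eqP].
  by rewrite /u /r ru scaleNr addNr.
by rewrite addr_eq0 -scaleNr => /eqP ru; rewrite -/r ru.
Qed.

Lemma soliton_kernel_iff :
  (exists y, M^T *m y = 0 /\ Xvec c g = - (2 * lam) *: b + y) <-> u = 0.
Proof.
have uE : u = 2^-1 *: (M^T *m (Xvec c g + (2 * lam) *: b)).
  rewrite mulmxDr scalerDr -!scalemxAr scalerA mulrA mulVf ?mul1r //.
  by rewrite pnatr_eq0.
split=> [[y [My0 Xy]] | u0].
  by rewrite uE Xy scaleNr addrAC addNr add0r My0 scaler0.
exists (Xvec c g + (2 * lam) *: b); split; last by rewrite scaleNr addrC addrK.
by move: u0; rewrite uE => /eqP; rewrite scaler_eq0 invr_eq0 pnatr_eq0 => /eqP.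
Qed.

End Nilsoliton.

Theorem theorem1p5 (R : realType) (n : nat) (c : 'I_n -> 'I_n -> 'I_n -> R)
    (g : 'I_n -> R) (lam : R) (b : 'cV[R]_(nroots c)) :
  nice_nilpotent c ->
  (forall i, g i != 0) ->
  root_matrix c *m (root_matrix c)^T *m b = const_mx 1 ->
  let G := diag_mx (\row_i g i) in
  [<-> (exists D : 'M[R]_n, derivation c D /\ ricci c G = lam%:M + D);
       ricci c G = lam *: (1%:M - nikolayevsky c b);
       exists y : 'cV[R]_(nroots c),
         (root_matrix c)^T *m y = 0 /\ Xvec c g = - (2 * lam) *: b + y].
Proof.
move=> nice g_neq0 MMtb G.
have derivation_iff := soliton_derivation_iff lam nice g_neq0 MMtb.
have nikolayevsky_iff := soliton_nikolayevsky_iff lam b nice g_neq0.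
have kernel_iff := soliton_kernel_iff g lam b.
by tfae=> [/derivation_iff/nikolayevsky_iff | /nikolayevsky_iff/kernel_iff
          | /kernel_iff/derivation_iff].
Qed.
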